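(* Consider the multicast coalitional game with player set $\mathcal{N}=\{1,\dots,n\}$ and value function $$v(S)=\sum_{i\in S}U_i-\sum_{i\in S}\frac{\alpha_i}{R_S}-\frac{\beta+\gamma}{R_S},\qquad R_S=\min_{i\in S}R_i,$$ for nonempty $S\subseteq\mathcal{N}$, where the rates satisfy $R_1\le R_2\le\dots\le R_n$. Let $\mathbf{P}=\{P_1,\dots,P_n\}$ with $P_i=\{i\}$. If $$\frac{R_{i+1}}{R_i}\ge\frac{\alpha_{i+1}+\beta+\gamma}{\alpha_{i+1}}\quad\forall i\in\{1,\dots,n-1\},$$ then $\mathbf{P}$ is $\mathbb{D}_c$-stable.
   Context: A transmitter multicasts a file of size $X>0$ bits to users $\mathcal{N}$. User $i$ has valuation $U_i\in\mathbb{R}$, downloads at rate $R_i>0$, and consumes receive power $P_{Rx,i}>0$; the transmitter transmits at power $P_{Tx}>0$. Costs per unit energy are $a>0$ at users and $b>0$ at the transmitter; bandwidth cost per second is $w>0$. Set $\alpha_i=aP_{Rx,i}X$, $\beta=bP_{Tx}X$, $\gamma=wX$. A collection is a set $\mathbf{S}=\{S_1,\dots,S_k\}$ of mutually disjoint nonempty subsets of $\mathcal{N}$, with value $v(\mathbf{S})=\sum_{i=1}^kv(S_i)$. For a partition $\mathbf{P}=\{P_1,\dots,P_n\}$, $\mathbf{S}[\mathbf{P}]$ is the collection of the nonempty sets among $(\bigcup_{i=1}^kS_i)\cap P_1,\dots,(\bigcup_{i=1}^kS_i)\cap P_n$. A partition $\mathbf{P}$ is $\mathbb{D}_c$-stable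 if $v(\mathbf{S}[\mathbf{P}])\ge v(\mathbf{S})$ for every collection $\mathbf{S}$. The ordering $R_1\le\dots\le R_n$ is the paper's standing assumption that the coalitions of $\mathbf{P}$ are indexed in increasing order of rates. *)

From HB Require Import structures.
From mathcomp Require Import all_boot all_order all_algebra.
Set Implicit Arguments. Unset Strict Implicit. Unset Printing Implicit Defensive.
Import Order.TTheory GRing.Theory Num.Theory.
Local Open Scope ring_scope.

(* Players are 'I_n (index i corresponds to user i+1 of the paper). *)

(* R_S = min_{i in S} R_i (for nonempty S; 0 for the empty set, never used). *)
Definition Rmin (R : realFieldType) (n : nat) (Rt : 'I_n -> R) (S : {set 'I_n}) : R :=
  match [pick i in S] with
  | Some i0 => \big[Num.min/Rt i0]_(j in S) Rt j
  | None => 0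
  end.

Definition vS (R : realFieldType) (n : nat) (U Rt alpha : 'I_n -> R) (beta gamma : R)
  (S : {set 'I_n}) : R :=
  \sum_(i in S) U i - \sum_(i in S) alpha i / Rmin Rt S - (beta + gamma) / Rmin Rt S.

Definition collection (n : nat) (C : {set {set 'I_n}}) : bool :=
  trivIset C && (set0 \notin C).

Definition vC (R : realFieldType) (n : nat) (U Rt alpha : 'I_n -> R) (beta gamma : R)
  (C : {set {set 'I_n}}) : R :=
  \sum_(S in C) vS U Rt alpha beta gamma S.

Definition restrict (n : nat) (C P : {set {set 'I_n}}) : {set {set 'I_n}} :=
  [set cover C :&: B | B in P] :\ set0.

Definition Dc_stable (R : realFieldType) (n : nat) (U Rt alpha : 'I_n -> R) (beta gamma : R)
  (P : {set {set 'I_n}}) : Prop :=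
  forall C : {set {set 'I_n}}, collection C ->
    vC U Rt alpha beta gamma (restrict C P) >= vC U Rt alpha beta gamma C.

Definition singletons (n : nat) : {set {set 'I_n}} := [set [set i] | i : 'I_n].

From HB Require Import structures.
From mathcomp Require Import all_boot all_order all_algebra.
Import Order.TTheory GRing.Theory Num.Theory.
Local Open Scope ring_scope.
Set Implicit Arguments.
Unset Strict Implicit.

(* Restricting a collection to the singleton partition yields the singletons
   of its union, so it suffices that splitting a single coalition S into
   singletons does not lower its value.  Let m be the slowest member of S.
   Alone, m pays its receive cost alpha_m/R_m in S plus the whole
   transmission cost (beta + gamma)/R_m of S.
   Any other member i satisfies i - 1 >= m, so the rate condition gives
   (alpha_i + beta + gamma)/R_i <= alpha_i/R_(i-1) <= alpha_i/R_m: alone, i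
   pays no more than its receive cost inside S. *)

Lemma Rmin_set1 (R : realFieldType) (n : nat) (Rt : 'I_n -> R) (i : 'I_n) :
  Rmin Rt [set i] = Rt i.
Proof.
rewrite /Rmin; case: pickP => [i0|/(_ i)]; last by rewrite set11.
by rewrite inE => /eqP ->; rewrite bigmin_set1 minxx.
Qed.

Lemma Rmin_first (R : realFieldType) (n : nat) (Rt : 'I_n -> R)
    (S : {set 'I_n}) (m : 'I_n) :
  {homo Rt : i j / (i <= j)%N >-> i <= j} ->
  m \in S -> (forall j, j \in S -> (m <= j)%N) -> Rmin Rt S = Rt m.
Proof.
move=> Rt_mono mS m_first; rewrite /Rmin.
case: pickP => [i0 i0S|/(_ m)]; last by rewrite mS.
apply/eqP; rewrite eq_le (bigmin_le_cond _ _ mS) /=.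
by apply: le_bigmin => [|j jS]; apply/Rt_mono/m_first.
Qed.

Lemma restrict_singletons (n : nat) (C : {set {set 'I_n}}) :
  restrict C (singletons n) = [set [set i] | i in cover C].
Proof.
have cover_set1 i : cover C :&: [set i] = if i \in cover C then [set i] else set0.
  case: ifP => iC; apply/setP => j; rewrite !inE;
  by case: eqVneq => [->|]; rewrite ?iC ?andbF.
apply/setP => S; rewrite /restrict /singletons -imset_comp !inE.
apply/andP/imsetP => [[SN /imsetP [i _ /= SE]]|[i iC ->]].
  by move: SN; rewrite SE cover_set1; case: ifP => [iC _|]; [exists i|rewrite eqxx].
split; first by apply/set0Pn; exists i; rewrite set11.
by apply/imsetP; exists i; rewrite //= cover_set1 iC.
Qed.

Lemma cost_le_of_rate_ratio (R : realFieldType) (A c Ri Rp Rm : R) :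
  0 < A -> 0 < Ri -> 0 < Rm -> Rm <= Rp ->
  (A + c) / A <= Ri / Rp -> (A + c) / Ri <= A / Rm.
Proof.
move=> A_gt0 Ri_gt0 Rm_gt0 Rm_le_Rp ratio.
have Rp_gt0 : 0 < Rp by apply: lt_le_trans Rm_le_Rp.
apply: (@le_trans _ _ (A / Rp)); last by rewrite ler_pM2l // lef_pV2 ?posrE.
by rewrite ler_pdivrMr // mulrAC -mulrA mulrC -ler_pdivrMr.
Qed.

Section SingletonSplit.

Variables (R : realFieldType) (n : nat) (U Rt alpha : 'I_n -> R) (beta gamma : R).
Hypothesis Rt_gt0 : forall i, 0 < Rt i.
Hypothesis alpha_gt0 : forall i, 0 < alpha i.
Hypothesis Rt_mono : {homo Rt : i j / (i <= j)%N >-> i <= j}.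
Hypothesis rate_ratio : forall i j : 'I_n, val j = (val i).+1 ->
  (alpha j + (beta + gamma)) / alpha j <= Rt j / Rt i.

Local Notation v := (vS U Rt alpha beta gamma).

Lemma vS_set1 i : v [set i] = U i - (alpha i + (beta + gamma)) / Rt i.
Proof. by rewrite /vS Rmin_set1 !big_set1 -addrA -opprD -mulrDl. Qed.

Lemma solo_cost_le (m i : 'I_n) : (m < i)%N ->
  (alpha i + (beta + gamma)) / Rt i <= alpha i / Rt m.
Proof.
move=> lt_mi; have i_gt0 : (0 < i)%N by apply: leq_ltn_trans lt_mi.
have ip_lt_n : (i.-1 < n)%N by apply: leq_ltn_trans (leq_pred _) (ltn_ord i).
pose ip := Ordinal ip_lt_n.
apply: (@cost_le_of_rate_ratio _ _ _ _ (Rt ip)) => //.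
  by apply: Rt_mono; rewrite /= -ltnS prednK.
by apply: rate_ratio; rewrite /= prednK.
Qed.

Lemma vS_le_sum_set1 (S : {set 'I_n}) : S != set0 -> v S <= \sum_(i in S) v [set i].
Proof.
case/set0Pn => i0 i0S; case: (arg_minnP val i0S) => m mS m_first.
under eq_bigr do rewrite vS_set1.
rewrite /vS (Rmin_first Rt_mono mS m_first).
rewrite sumrB -addrA lerD2l -opprD lerN2.
rewrite (bigD1 m mS) [X in _ <= X + _](bigD1 m mS) /= addrAC -mulrDl lerD2l.
apply: ler_sum => i /andP [iS i_neq_m]; apply: solo_cost_le.
by rewrite ltn_neqAle m_first // andbT; apply: contra i_neq_m => /eqP/val_inj ->.
Qed.

Lemma singletons_Dc_stable : Dc_stable U Rt alpha beta gamma (singletons n).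
Proof.
move=> C /andP [C_triv set0_notin_C].
rewrite /vC restrict_singletons big_imset /=; last by move=> i j _ _ /set1_inj.
rewrite (big_trivIset _ C_triv) /=; apply: ler_sum => S SC.
by apply: vS_le_sum_set1; apply: contraNneq set0_notin_C => <-.
Qed.

End SingletonSplit.

Theorem theorem8 (R : realFieldType) (n : nat)
  (U Rt PRx : 'I_n -> R) (PTx X a b w : R)
  (hRt : forall i, 0 < Rt i) (hPRx : forall i, 0 < PRx i)
  (hPTx : 0 < PTx) (hX : 0 < X) (ha : 0 < a) (hb : 0 < b) (hw : 0 < w)
  (hsorted : forall i j : 'I_n, (i <= j)%N -> Rt i <= Rt j)
  (hcond : forall i j : 'I_n, val j = (val i).+1 ->
     Rt j / Rt i >= (a * PRx j * X + b * PTx * X + w * X) / (a * PRx j * X)) :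
  Dc_stable U Rt (fun i => a * PRx i * X) (b * PTx * X) (w * X) (singletons n).
Proof.
apply: singletons_Dc_stable => // [i|i j /hcond]; first by rewrite !mulr_gt0.
by rewrite addrA.
Qed.
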